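(* Let $R>r>0$, $q=\frac{1}{2r}-\frac{1}{2R}$, and let $K^{-1/2}_0$, $\mathcal{K}^*_{\partial\Omega}$ and the family $\{\mathbb{E}(t)\}_{t\in[-1/2,1/2]}$ be as described in the context. Then $\mathcal{K}^*_{\partial\Omega}$ has the spectral resolution $$\mathcal{K}^*_{\partial\Omega}=\int_{-1/2}^{1/2} t\,d\mathbb{E}(t),$$ that is, for all $f,g\in K^{-1/2}_0$, $$\langle f,\mathcal{K}^*_{\partial\Omega}[g]\rangle_{-1/2}=\int_{-1/2}^{1/2} t\,d\langle f,\mathbb{E}(t)g\rangle_{-1/2}.$$
   Context: Setting (crescent domain). Identify $\mathbb{R}^2$ with $\mathbb{C}$; for $a\in\mathbb{R}\setminus\{0\}$ let $B_a$ be the open disk of radius $|a|$ centered at $(a,0)$. Fix $R>r>0$ and let $\Omega=B_R\setminus\overline{B_r}$ (a crescent with a cusp at $0$). Put $q=\frac{1}{2r}-\frac{1}{2R}>0$. For $k\in\mathbb{R}\setminus\{0\}$ define the diagonal matrices $$\mathbb{S}(k)=\frac{1}{2|k|}\begin{bmatrix}1-e^{-|k|q}&0\\0&1+e^{-|k|q}\end{bmatrix},\qquad \mathbb{K}(k)=\frac12 e^{-|k|q}\begin{bmatrix}-1&0\\0&1\end{bmatrix}.$$ The space $K^{-1/2}_0$ is the Hilbert space of pairs $\hat\varphi=(\hat\varphi_1,\hat\varphi_2)^T$ of measurable complex-valued functions on $\mathbb{R}$ (modulo a.e. equality) with $\int_{\mathbb{R}}\hat\varphi(k)^T\mathbb{S}(k)\overline{\hat\varphi(k)}\,dk<\infty$,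 with inner product $\langle\psi,\varphi\rangle_{-1/2}=\int_{\mathbb{R}}\hat\psi(k)^T\mathbb{S}(k)\overline{\hat\varphi(k)}\,dk$. (In the paper an element $\varphi$ of this space is the boundary density $\varphi=U^{-1}P\hat\varphi$ on $\partial\Omega$, where $P=\frac1{\sqrt2}\begin{bmatrix}-1&1\\1&1\end{bmatrix}$ and $U\varphi=(\mathcal{F}(h_R\varphi_R),\mathcal{F}(h_r\varphi_r))^T$ is the Fourier transform of the density pulled back by $z\mapsto 1/z$ to the lines $x=\frac1{2R}$, $x=\frac1{2r}$, with $h_a(y)=1/((2a)^{-2}+y^2)$; one writes $PU\varphi=(\hat\varphi_1,\hat\varphi_2)^T$.) The Neumann–Poincaré operator $\mathcal{K}^*_{\partial\Omega}$ on $K^{-1/2}_0$ is defined by $PU(\mathcal{K}^*_{\partial\Omega}[\varphi])(k)=\mathbb{K}(k)\,PU\varphi(k)$, i.e. it multiplies $\hat\varphi_1$ by $-\frac12e^{-|k|q}$ and $\hat\varphi_2$ by $\frac12 e^{-|k|q}$. For $s\in\mathbb{R}\cup\{\infty\}$ define orthogonal projections $\mathcal{P}^1(s)(\hat\varphi_1,\hat\varphi_2)=(\chi_{(-\infty,s]}\hat\varphi_1,0)$ and $\mathcal{P}^2(s)(\hat\varphi_1,\hat\varphi_2)=(0,\chi_{(-\infty,s]}\hat\varphi_2)$ (with $\chi_{(-\infty,\infty]}\equiv1$), and let $\mathbb{I}=\mathcal{P}^1(\infty)+\mathcal{P}^2(\infty)$ be the identity. Define $$\mathbb{E}(t)=\begin{cases}\mathcal{P}^1\!\left(-\frac{\ln(-2t)}{q}\right)-\mathcal{P}^1\!\left(\frac{\ln(-2t)}{q}\right),&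 t\in[-1/2,0),\\[2pt] \mathcal{P}^2\!\left(\frac{\ln(2t)}{q}\right)-\mathcal{P}^2\!\left(-\frac{\ln(2t)}{q}\right)+\mathbb{I},& t\in(0,1/2],\end{cases}\qquad \mathbb{E}(0)=\lim_{t\to0^+}\mathbb{E}(t).$$ *)

From mathcomp Require Import all_boot all_order all_algebra.
From mathcomp Require Import all_classical all_reals all_analysis.
From mathcomp Require Import complex.
Import Order.TTheory GRing.Theory Num.Theory.

Set Implicit Arguments.
Unset Strict Implicit.
Unset Printing Implicit Defensive.

Local Open Scope ring_scope.

Section Crescent.
Variable R : realType.

Definition rC (x : R) : R[i] := complex.Complex x 0.
Definition cnorm (z : R[i]) : R :=
  Num.sqrt (complex.Re z ^+ 2 + complex.Im z ^+ 2).

Definition qval (Rad rad : R) : R := 1 / (2 * rad) - 1 / (2 * Rad).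

(* diagonal entries of S(k) (for k = 0 the formula gives 0; a null set) *)
Definition S11 (q k : R) : R := (1 - expR (- (`|k| * q))) / (2 * `|k|).
Definition S22 (q k : R) : R := (1 + expR (- (`|k| * q))) / (2 * `|k|).

(* elements hat phi = (hat phi_1, hat phi_2)^T : pairs of functions R -> C *)
Definition pfun := ((R -> R[i]) * (R -> R[i]))%type.

Definition Sform (q : R) (psi phi : pfun) (k : R) : R[i] :=
  psi.1 k * rC (S11 q k) * (phi.1 k)^* + psi.2 k * rC (S22 q k) * (phi.2 k)^*.

Definition cmeasurable (f : R -> R[i]) : Prop :=
  measurable_fun [set: R] (fun k => complex.Re (f k)) /\
  measurable_fun [set: R] (fun k => complex.Im (f k)).

Definition inK (q : R) (phi : pfun) : Prop :=
  [/\ cmeasurable phi.1, cmeasurable phi.2 &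
   (\int[@lebesgue_measure R]_(k in [set: R]) (complex.Re (Sform q phi phi k))%:E
      < +oo)%E].

Definition ipK (q : R) (psi phi : pfun) : R[i] :=
  complex.Complex
    (Rintegral (@lebesgue_measure R) [set: R] (fun k => complex.Re (Sform q psi phi k)))
    (Rintegral (@lebesgue_measure R) [set: R] (fun k => complex.Im (Sform q psi phi k))).

(* Neumann-Poincare operator in Fourier variables *)
Definition Kstar (q : R) (phi : pfun) : pfun :=
  (fun k => rC (- (1/2) * expR (- (`|k| * q))) * phi.1 k,
   fun k => rC ((1/2) * expR (- (`|k| * q))) * phi.2 k).

Definition chi_le (s : \bar R) (k : R) : R[i] := if (k%:E <= s)%E then 1 else 0.

Definition P1 (s : \bar R) (phi : pfun) : pfun :=
  (fun k => chi_le s k * phi.1 k, fun _ => 0).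
Definition P2 (s : \bar R) (phi : pfun) : pfun :=
  (fun _ => 0, fun k => chi_le s k * phi.2 k).

Definition padd (phi psi : pfun) : pfun := (fun k => phi.1 k + psi.1 k, fun k => phi.2 k + psi.2 k).
Definition psub (phi psi : pfun) : pfun := (fun k => phi.1 k - psi.1 k, fun k => phi.2 k - psi.2 k).

Definition Iop (phi : pfun) : pfun := padd (P1 +oo%E phi) (P2 +oo%E phi).

(* the family E(t); E(0) is the (strong) limit t -> 0+, i.e. the t>0 formula
   with ln(2t)/q replaced by its limit -oo *)
Definition Efam (q t : R) (phi : pfun) : pfun :=
  if t < 0 then
    psub (P1 (- (ln (- (2 * t)) / q))%:E phi) (P1 (ln (- (2 * t)) / q)%:E phi)
  else if 0 < t then
    padd (psub (P2 (ln (2 * t) / q)%:E phi) (P2 (- (ln (2 * t) / q))%:E phi)) (Iop phi)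
  else
    padd (psub (P2 -oo%E phi) (P2 +oo%E phi)) (Iop phi).

Definition tagged_partition (a b : R) (x xi : seq R) : Prop :=
  [/\ size x = (size xi).+1, nth 0 x 0 = a, nth 0 x (size xi) = b,
      forall i, (i < size xi)%N -> nth 0 x i < nth 0 x i.+1 &
      forall i, (i < size xi)%N -> nth 0 x i <= nth 0 xi i <= nth 0 x i.+1].

Definition mesh_lt (x xi : seq R) (delta : R) : Prop :=
  forall i, (i < size xi)%N -> nth 0 x i.+1 - nth 0 x i < delta.

Definition RS_sum (f : R -> R) (F : R -> R[i]) (x xi : seq R) : R[i] :=
  \sum_(i < size xi) rC (f (nth 0 xi i)) * (F (nth 0 x i.+1) - F (nth 0 x i)).

Definition is_RS_integral (f : R -> R) (F : R -> R[i]) (a b : R) (I : R[i]) : Prop :=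
  forall eps : R, 0 < eps ->
    exists2 delta : R, 0 < delta &
      forall x xi, tagged_partition a b x xi -> mesh_lt x xi delta ->
        cnorm (RS_sum f F x xi - I) < eps.

End Crescent.

(* In Fourier variables both operators are diagonal multiplications: K* multiplies
   the two components of a density by the symbols -e^{-|k|q}/2 and e^{-|k|q}/2, and
   E(t) multiplies them by unit steps of t jumping exactly where the symbol equals t.
   For fixed k, a Riemann-Stieltjes sum of t against such a step differs from the
   jump point by at most the mesh (the sum telescopes to the tag of the one interval
   containing the jump).  Exchanging the finite sum with the k-integral therefore bounds
   the error of the sum for t |-> <f, E(t)g> by the mesh times the L^1 norms of the
   components of the integrand of <f, g>, which are finite because f and g have finite
   energy. *)

From mathcomp Require Import all_boot all_order all_algebra.
From mathcomp Require Import all_classical all_reals all_analysis.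
From mathcomp Require Import complex.
From mathcomp Require Import ring lra zify.
From mathcomp Require Import measurable_realfun.
Import Order.TTheory GRing.Theory Num.Theory.

Set Implicit Arguments.
Unset Strict Implicit.
Unset Printing Implicit Defensive.
Local Open Scope classical_set_scope.
Local Open Scope ring_scope.

Section RiemannStieltjes.
Variables (R : realType) (a b : R).

Definition RS_sumR (f F : R -> R) (x xi : seq R) : R :=
  \sum_(i < size xi) f (nth 0 xi i) * (F (nth 0 x i.+1) - F (nth 0 x i)).

Definition is_RS_integralR (f F : R -> R) (I : R) : Prop :=
  forall eps : R, 0 < eps ->
    exists2 delta : R, 0 < delta &
      forall x xi, tagged_partition a b x xi -> mesh_lt x xi delta ->
        `|RS_sumR f F x xi - I| < eps.

Lemma mesh_lt_le x xi (d d' : R) : d <= d' -> mesh_lt x xi d -> mesh_lt x xi d'.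
Proof. by move=> dd' ms i /ms /lt_le_trans; apply. Qed.

Lemma cnorm_le_Re_Im (z : R[i]) : cnorm z <= `|complex.Re z| + `|complex.Im z|.
Proof.
rewrite /cnorm -[X in _ <= X]ger0_norm ?addr_ge0 // -sqrtr_sqr ler_sqrt //.
rewrite sqrrD !real_normK ?num_real //.
by rewrite -addrA lerD2l lerDr mulrn_wge0 // mulr_ge0.
Qed.

Lemma RS_sum_Complex f (A B : R -> R) x xi :
  RS_sum f (fun t => Complex (A t) (B t)) x xi =
  Complex (RS_sumR f A x xi) (RS_sumR f B x xi).
Proof.
rewrite /RS_sum /RS_sumR; elim/big_rec3: _ => [//|i z u v _ ->].
by rewrite /rC /=; congr Complex; ring.
Qed.

Lemma is_RS_integral_Complex f (A B : R -> R) IA IB :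
  is_RS_integralR f A IA -> is_RS_integralR f B IB ->
  is_RS_integral f (fun t => Complex (A t) (B t)) a b (Complex IA IB).
Proof.
move=> intA intB eps eps_gt0.
have eps2_gt0 : 0 < eps / 2 by rewrite divr_gt0.
have [dA dA_gt0 hA] := intA _ eps2_gt0; have [dB dB_gt0 hB] := intB _ eps2_gt0.
exists (Order.min dA dB); first by rewrite lt_min dA_gt0.
move=> x xi tp ms.
have /hA {}hA : mesh_lt x xi dA by apply: mesh_lt_le ms; rewrite ge_min lexx.
have /hB {}hB : mesh_lt x xi dB by apply: mesh_lt_le ms; rewrite ge_min lexx orbT.
apply: le_lt_trans (cnorm_le_Re_Im _) _.
rewrite RS_sum_Complex /= (splitr eps) ltrD //; [exact: hA | exact: hB].
Qed.

Definition unit_step (m : R -> R) (l : R) : Prop :=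
  [/\ m a = 0, m b = 1 &
      forall t, a <= t <= b -> (m t = 0 /\ t <= l) \/ (m t = 1 /\ l <= t)].

Lemma tagged_partition_nodes x xi : tagged_partition a b x xi ->
  forall i, (i <= size xi)%N -> a <= nth 0 x i <= b.
Proof.
case=> _ x0 xn incr _.
have ge_a i : (i <= size xi)%N -> a <= nth 0 x i.
  elim: i => [|i IH] lei; first by rewrite x0.
  exact: le_trans (IH (ltnW lei)) (ltW (incr i lei)).
have le_b j : (j <= size xi)%N -> nth 0 x (size xi - j) <= b.
  elim: j => [|j IH] lej; first by rewrite subn0 xn.
  have lt_j : (size xi - j.+1 < size xi)%N by lia.
  have := incr _ lt_j; rewrite (_ : (size xi - j.+1).+1 = size xi - j)%N; last by lia.
  by move/ltW/le_trans; apply; apply: IH; exact: ltnW.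
by move=> i lei; rewrite ge_a //= -(subKn lei) le_b // leq_subr.
Qed.

Lemma unit_step_bounds m l : a <= b -> unit_step m l ->
  (forall t, a <= t <= b -> `|m t| <= 1) /\ a <= l <= b.
Proof.
move=> le_ab [ma mb jump]; split.
  by move=> t /jump [[-> _]|[-> _]]; rewrite ?normr0 ?normr1.
have ab_a : a <= a <= b by rewrite lexx le_ab.
have ab_b : a <= b <= b by rewrite lexx le_ab.
case: (jump _ ab_a) => [[_ ->]|[]]; last by rewrite ma => /esym/eqP; rewrite oner_eq0.
by case: (jump _ ab_b) => [[]|[_ ->]]; first by rewrite mb => /eqP; rewrite oner_eq0.
Qed.

Lemma RS_sum_unit_step x xi d m l :
  tagged_partition a b x xi -> mesh_lt x xi d -> unit_step m l ->
  `|RS_sumR id m x xi - l| <= d.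
Proof.
move=> tp ms [ma mb jump]; have node := @tagged_partition_nodes _ _ tp.
case: tp => _ x0 xn incr tag.
have total : \sum_(i < size xi) (m (nth 0 x i.+1) - m (nth 0 x i)) = 1.
  rewrite -(big_mkord xpredT (fun i => m (nth 0 x i.+1) - m (nth 0 x i))).
  by rewrite telescope_sumr // x0 xn ma mb subr0.
have -> : RS_sumR id m x xi - l =
    \sum_(i < size xi) (nth 0 xi i - l) * (m (nth 0 x i.+1) - m (nth 0 x i)).
  by rewrite /RS_sumR (eq_bigr _ (fun i _ => mulrBl _ _ _)) sumrB -mulr_sumr total mulr1.
rewrite -[d]mulr1 -total mulr_sumr.
apply: le_trans (ler_norm_sum _ _ _) (ler_sum _ _) => i _.
have lt_i := ltn_ord i.
have := tag i lt_i; have := incr i lt_i; have := ms i lt_i.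
case: (jump _ (node i (ltnW lt_i))) => -[-> ?];
  case: (jump _ (node i.+1 lt_i)) => -[-> ?] ? ? /andP[? ?];
  rewrite ?subrr ?mulr0 ?normr0 // ?subr0 ?mulr1.
- by rewrite ler_norml; apply/andP; split; lra.
- lra.
Qed.

End RiemannStieltjes.

Section DiagonalMultiplication.
Context d (T : measurableType d) (R : realType) (mu : {measure set T -> \bar R}).
Local Notation integrable u := (mu.-integrable setT (EFin \o u)).

Lemma integrable_measurable (u : T -> R) : integrable u -> measurable_fun setT u.
Proof. by move/measurable_int/measurable_EFinP. Qed.

Lemma integrable_le_norm (u w : T -> R) : measurable_fun setT u ->
  (forall k, `|u k| <= `|w k|) -> integrable w -> integrable u.
Proof.
move=> mu_ uw iw; apply: le_integrable iw => //; first exact/measurable_EFinP.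
by move=> k _; rewrite lee_fin.
Qed.

Lemma integrable_bounded_mul (c u : T -> R) (C : R) : measurable_fun setT c ->
  (forall k, `|c k| <= C) -> integrable u -> integrable (fun k => c k * u k).
Proof.
move=> mc cC iu; apply: (@integrable_le_norm _ (fun k => C * u k)).
- by apply: measurable_funM => //; exact: integrable_measurable.
- by move=> k; rewrite !normrM ler_wpM2r // (le_trans (cC k) (ler_norm C)).
- exact: integrableZl iu.
Qed.

Lemma integrable_sumR I (s : seq I) (F : I -> T -> R) :
  (forall i, integrable (F i)) -> integrable (fun k => \sum_(i <- s) F i k).
Proof.
move=> iF; elim: s => [|i s IH].
  by apply: eq_integrable (integrable0 _ _) => // k _; rewrite /= big_nil.
by apply: eq_integrable (integrableD _ (iF i) IH) => // k _; rewrite /= big_cons.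
Qed.

Lemma Rintegral_sum I (s : seq I) (F : I -> T -> R) :
  (forall i, integrable (F i)) ->
  \int[mu]_k (\sum_(i <- s) F i k) = \sum_(i <- s) \int[mu]_k F i k.
Proof.
move=> iF; elim: s => [|i s IH].
  by under eq_Rintegral do rewrite big_nil; rewrite Rintegral_cst // mul0r big_nil.
under eq_Rintegral do rewrite big_cons.
by rewrite RintegralD // ?big_cons ?IH //; exact: integrable_sumR.
Qed.

Section RSsumRintegral.
Variables (f : R -> R) (phi : R -> T -> R) (x xi : seq R).
Hypothesis iphi : forall i, (i <= size xi)%N -> integrable (phi (nth 0 x i)).

Let integrable_RS_diff (i : 'I_(size xi)) :
  integrable (fun k => phi (nth 0 x i.+1) k - phi (nth 0 x i) k).
Proof. exact: integrableB (iphi (ltn_ord i)) (iphi (ltnW (ltn_ord i))). Qed.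

Lemma integrable_RS_sumR : integrable (fun k => RS_sumR f (phi^~ k) x xi).
Proof. by apply: integrable_sumR => i; exact: integrableZl _ _ (integrable_RS_diff i). Qed.

Lemma RS_sumR_Rintegral :
  RS_sumR f (fun t => \int[mu]_k phi t k) x xi = \int[mu]_k RS_sumR f (phi^~ k) x xi.
Proof.
rewrite /RS_sumR Rintegral_sum => [|i]; last exact: integrableZl _ _ (integrable_RS_diff i).
apply: eq_bigr => i _; rewrite RintegralZl ?RintegralB //.
- exact: iphi (ltn_ord i).
- exact: iphi (ltnW (ltn_ord i)).
Qed.

End RSsumRintegral.

Variables (a b : R) (u1 u2 l1 l2 : T -> R) (m1 m2 : R -> T -> R).
Hypotheses (iu1 : integrable u1) (iu2 : integrable u2).
Hypotheses (ml1 : measurable_fun setT l1) (ml2 : measurable_fun setT l2).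
Hypotheses (mm1 : forall t, measurable_fun setT (m1 t))
           (mm2 : forall t, measurable_fun setT (m2 t)).
Hypotheses (step1 : forall k, unit_step a b (m1^~ k) (l1 k))
           (step2 : forall k, unit_step a b (m2^~ k) (l2 k)).

Local Notation E := (fun t => \int[mu]_k (m1 t k * u1 k + m2 t k * u2 k)).
Local Notation L := (\int[mu]_k (l1 k * u1 k + l2 k * u2 k)).

Lemma RS_sum_diag_mul_le x xi delta :
  tagged_partition a b x xi -> mesh_lt x xi delta ->
  `|RS_sumR id E x xi - L| <= delta * \int[mu]_k (`|u1 k| + `|u2 k|).
Proof.
move=> tp ms; have node := @tagged_partition_nodes _ _ _ _ _ tp.
pose phi t k := m1 t k * u1 k + m2 t k * u2 k.
have le_ab : a <= b by have /andP[] := node _ (leqnn _); exact: le_trans.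
have m_le1 (m : R -> T -> R) (l : T -> R) t k :
    unit_step a b (m^~ k) (l k) -> a <= t <= b -> `|m t k| <= 1.
  by move=> /(unit_step_bounds le_ab) [+ _]; apply.
have l_le (m : R -> T -> R) (l : T -> R) k :
    unit_step a b (m^~ k) (l k) -> `|l k| <= `|a| + `|b|.
  move=> /(unit_step_bounds le_ab) [_ /andP[al lb]].
  have := ler_norm b; have := ler_norm (- a); rewrite normrN ler_norml.
  have := normr_ge0 a; have := normr_ge0 b; lra.
have iE i : (i <= size xi)%N -> integrable (phi (nth 0 x i)).
  move=> lei; have t_ab := node _ lei.
  have h1 := integrable_bounded_mul (mm1 _) (fun k => m_le1 _ _ _ k (step1 k) t_ab) iu1.
  have h2 := integrable_bounded_mul (mm2 _) (fun k => m_le1 _ _ _ k (step2 k) t_ab) iu2.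
  exact: integrableD _ h1 h2.
have iL : integrable (fun k => l1 k * u1 k + l2 k * u2 k).
  exact: integrableD _ (integrable_bounded_mul ml1 (fun k => l_le _ _ k (step1 k)) iu1)
    (integrable_bounded_mul ml2 (fun k => l_le _ _ k (step2 k)) iu2).
have iS := @integrable_RS_sumR id phi _ _ iE.
rewrite (RS_sumR_Rintegral _ iE) -RintegralB //.
apply: le_trans (le_normr_Rintegral _ (integrableB _ iS iL)) _ => //.
rewrite -RintegralZl //; last exact: integrableD (integrable_abse iu1) (integrable_abse iu2).
apply: le_Rintegral => //.
- exact: integrable_abse (integrableB _ iS iL).
- exact: integrableZl _ _ (integrableD _ (integrable_abse iu1) (integrable_abse iu2)).
move=> k _.
have -> : RS_sumR id (phi^~ k) x xi
          - (l1 k * u1 k + l2 k * u2 k) =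
    (RS_sumR id (m1^~ k) x xi - l1 k) * u1 k + (RS_sumR id (m2^~ k) x xi - l2 k) * u2 k.
  have -> : RS_sumR id (phi^~ k) x xi =
      RS_sumR id (m1^~ k) x xi * u1 k + RS_sumR id (m2^~ k) x xi * u2 k.
    by rewrite /RS_sumR !mulr_suml -big_split; apply: eq_bigr => i _; rewrite /phi /=; ring.
  by ring.
rewrite mulrDr; apply: le_trans (ler_normD _ _) (lerD _ _);
  rewrite normrM ler_wpM2r //.
  exact: RS_sum_unit_step tp ms (step1 k).
exact: RS_sum_unit_step tp ms (step2 k).
Qed.

Lemma is_RS_integral_diag_mul : is_RS_integralR a b id E L.
Proof.
move=> eps eps_gt0; set C := \int[mu]_k (`|u1 k| + `|u2 k|).
have C_ge0 : 0 <= C by apply: Rintegral_ge0 => k _; rewrite addr_ge0.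
have C1_gt0 : 0 < C + 1 by rewrite ltr_wpDl.
exists (eps / (C + 1)); first by rewrite divr_gt0.
move=> x xi tp ms; apply: le_lt_trans (RS_sum_diag_mul_le tp ms) _.
by rewrite mulrAC ltr_pdivrMr // ltr_pM2l // ltrDl.
Qed.

End DiagonalMultiplication.

Section ComplexCross.
Variable R : realType.
Local Notation integrable u := ((@lebesgue_measure R).-integrable setT (EFin \o u)).

Definition cross (s : R) (z w : R[i]) : R[i] := z * rC s * w^*.

Lemma Re_addc (z w : R[i]) : complex.Re (z + w) = complex.Re z + complex.Re w.
Proof. by case: z w => ? ? [? ?]. Qed.

Lemma Re_cross s z w : complex.Re (cross s z w) =
  s * (complex.Re z * complex.Re w + complex.Im z * complex.Im w).
Proof. by case: z w => ? ? [? ?]; rewrite /cross /rC /=; ring. Qed.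

Lemma Im_cross s z w : complex.Im (cross s z w) =
  s * (complex.Im z * complex.Re w - complex.Re z * complex.Im w).
Proof. by case: z w => ? ? [? ?]; rewrite /cross /rC /=; ring. Qed.

Lemma cross_scale s c z w : cross s z (rC c * w) = rC c * cross s z w.
Proof. by case: z w => ? ? [? ?]; rewrite /cross /rC /=; congr Complex; ring. Qed.

Lemma Re_cross_diag_ge0 s z : 0 <= s -> 0 <= complex.Re (cross s z z).
Proof. by move=> s_ge0; rewrite Re_cross mulr_ge0 // addr_ge0 // -expr2 sqr_ge0. Qed.

Lemma cross_norm_le s z w : 0 <= s ->
  `|complex.Re (cross s z w)| <= complex.Re (cross s z z) + complex.Re (cross s w w) /\
  `|complex.Im (cross s z w)| <= complex.Re (cross s z z) + complex.Re (cross s w w).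
Proof.
move=> s_ge0; rewrite !Re_cross Im_cross.
case: z w => a b [c d] /=.
have sq_ge0 (x y : R) : 0 <= s * (x * x + y * y).
  by rewrite mulr_ge0 // addr_ge0 // -expr2 sqr_ge0.
have := sq_ge0 (a - c) (b - d); have := sq_ge0 (a + c) (b + d).
have := sq_ge0 (b - c) (a + d); have := sq_ge0 (b + c) (a - d).
by split; rewrite ler_norml; apply/andP; split; nra.
Qed.

Section MeasurableCross.
Variables (s : R -> R) (z w : R -> R[i]).
Hypotheses (ms : measurable_fun setT s) (mz : cmeasurable z) (mw : cmeasurable w).

Lemma measurable_cross :
  measurable_fun setT (fun k => complex.Re (cross (s k) (z k) (w k))) /\
  measurable_fun setT (fun k => complex.Im (cross (s k) (z k) (w k))).
Proof.
case: mz mw => [mzr mzi] [mwr mwi]; split.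
  rewrite (_ : (fun k => _) = fun k => s k * (complex.Re (z k) * complex.Re (w k) +
                                              complex.Im (z k) * complex.Im (w k))).
    by apply: measurable_funM => //; apply: measurable_funD; exact: measurable_funM.
  by apply/funext => k; rewrite Re_cross.
rewrite (_ : (fun k => _) = fun k => s k * (complex.Im (z k) * complex.Re (w k) -
                                            complex.Re (z k) * complex.Im (w k))).
  by apply: measurable_funM => //; apply: measurable_funB; exact: measurable_funM.
by apply/funext => k; rewrite Im_cross.
Qed.

Lemma integrable_cross : (forall k, 0 <= s k) ->
  integrable (fun k => complex.Re (cross (s k) (z k) (z k))) ->
  integrable (fun k => complex.Re (cross (s k) (w k) (w k))) ->
  integrable (fun k => complex.Re (cross (s k) (z k) (w k))) /\
  integrable (fun k => complex.Im (cross (s k) (z k) (w k))).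
Proof.
move=> s_ge0 iz iw; have [mRe mIm] := measurable_cross.
have iD := integrableD measurableT iz iw.
have D_ge0 k :
    0 <= complex.Re (cross (s k) (z k) (z k)) + complex.Re (cross (s k) (w k) (w k)).
  by rewrite addr_ge0 ?Re_cross_diag_ge0.
by split; apply: integrable_le_norm iD => // k; rewrite (ger0_norm (D_ge0 k));
  have [] := cross_norm_le (z k) (w k) (s_ge0 k).
Qed.

End MeasurableCross.

End ComplexCross.

Lemma measurable_inv (R : realType) : measurable_fun [set: R] (@GRing.inv R).
Proof.
have -> : @GRing.inv R = (fun x => if x == 0 then 0 else x^-1).
  by apply/funext => x; case: eqP => [->|]; rewrite ?invr0.
apply: measurable_fun_if => //; first exact: measurable_fun_eqr.
have -> : [set: R] `&` (fun x : R => x == 0) @^-1` [set false] = [set x | x != 0].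
  by apply/seteqP; split => x /=; [case=> _ /negbT|move/negbTE].
apply: open_continuous_measurable_fun; first exact: open_neq.
by move=> x; rewrite inE => /= x0; exact: inv_continuous.
Qed.

Lemma qval_gt0 (R : realType) (Rad rad : R) : 0 < rad -> rad < Rad -> 0 < qval Rad rad.
Proof.
move=> rad_gt0 rad_lt; rewrite /qval subr_gt0 !div1r ltf_pV2 ?posrE ?pmulr_rgt0 //.
  by rewrite ltr_pM2l.
exact: lt_trans rad_lt.
Qed.

Section Crescent.
Variables (R : realType) (q : R).
Local Notation integrable u := ((@lebesgue_measure R).-integrable setT (EFin \o u)).

Definition Kstar_sym1 (k : R) : R := - (1/2) * expR (- (`|k| * q)).
Definition Kstar_sym2 (k : R) : R := (1/2) * expR (- (`|k| * q)).

Definition window (s k : R) : R := (if k <= s then 1 else 0) - (if k <= - s then 1 else 0).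

Definition Efam_sym1 (t k : R) : R := if t < 0 then window (- (ln (- (2 * t)) / q)) k else 1.
Definition Efam_sym2 (t k : R) : R :=
  if t < 0 then 0 else if 0 < t then 1 - window (- (ln (2 * t) / q)) k else 0.

Definition diag_mul (c1 c2 : R -> R) (g : pfun R) : pfun R :=
  (fun k => rC (c1 k) * g.1 k, fun k => rC (c2 k) * g.2 k).

Lemma Kstar_diag g : Kstar q g = diag_mul Kstar_sym1 Kstar_sym2 g.
Proof. by []. Qed.

Lemma chi_le_EFin (r k : R) : chi_le r%:E k = rC (if k <= r then 1 else 0).
Proof. by rewrite /chi_le lee_fin; case: ifP. Qed.

Lemma Efam_diag t g : Efam q t g = diag_mul (Efam_sym1 t) (Efam_sym2 t) g.
Proof.
rewrite /Efam /diag_mul /Efam_sym1 /Efam_sym2 /window /Iop /psub /padd /P1 /P2.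
case: (t < 0); last case: (0 < t); congr pair; apply/funext => k /=;
  rewrite ?chi_le_EFin /chi_le ?leey ?leeNy_eq ?opprK /=;
  (* [ring] does not take [if] subterms as atoms *)
  do ?[move: (if _ then _ else _) => ?];
  case: (g.1 k) => ? ?; case: (g.2 k) => ? ?; rewrite /rC /=; congr Complex; ring.
Qed.

Lemma measurable_expR_absq : measurable_fun setT (fun k : R => expR (- (`|k| * q))).
Proof.
apply: (@measurableT_comp _ _ _ _ _ _ expR) => //; apply: measurableT_comp => //.
by apply: measurable_funM => //; exact: normr_measurable.
Qed.

Lemma measurable_Kstar_sym1 : measurable_fun setT Kstar_sym1.
Proof. by apply: measurable_funM => //; exact: measurable_expR_absq. Qed.

Lemma measurable_Kstar_sym2 : measurable_fun setT Kstar_sym2.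
Proof. by apply: measurable_funM => //; exact: measurable_expR_absq. Qed.

Lemma measurable_window s : measurable_fun setT (window s).
Proof.
by apply: measurable_funB; apply: measurable_fun_ifT => //; exact: measurable_fun_ler.
Qed.

Lemma measurable_Efam_sym1 t : measurable_fun setT (Efam_sym1 t).
Proof. by rewrite /Efam_sym1; case: (t < 0) => //; exact: measurable_window. Qed.

Lemma measurable_Efam_sym2 t : measurable_fun setT (Efam_sym2 t).
Proof.
rewrite /Efam_sym2; case: (t < 0) => //; case: (0 < t) => //.
by apply: measurable_funB => //; exact: measurable_window.
Qed.

Lemma measurable_S11 : measurable_fun setT (S11 q).
Proof.
apply: measurable_funM; first by apply: measurable_funB => //; exact: measurable_expR_absq.
change (measurable_fun setT (GRing.inv \o (fun k : R => 2 * `|k|))).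
apply: measurableT_comp; first exact: measurable_inv.
by apply: measurable_funM => //; exact: normr_measurable.
Qed.

Lemma measurable_S22 : measurable_fun setT (S22 q).
Proof.
apply: measurable_funM; first by apply: measurable_funD => //; exact: measurable_expR_absq.
change (measurable_fun setT (GRing.inv \o (fun k : R => 2 * `|k|))).
apply: measurableT_comp; first exact: measurable_inv.
by apply: measurable_funM => //; exact: normr_measurable.
Qed.

Lemma S22_ge0 k : 0 <= S22 q k.
Proof. by rewrite divr_ge0 ?mulr_ge0 // addr_ge0 // expR_ge0. Qed.

Lemma Sform_diag_mul f g c1 c2 k : Sform q f (diag_mul c1 c2 g) k =
  rC (c1 k) * cross (S11 q k) (f.1 k) (g.1 k) + rC (c2 k) * cross (S22 q k) (f.2 k) (g.2 k).
Proof. by rewrite -!cross_scale. Qed.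

Lemma ipK_diag_mul f g c1 c2 : ipK q f (diag_mul c1 c2 g) =
  Complex
    (\int[lebesgue_measure]_k (c1 k * complex.Re (cross (S11 q k) (f.1 k) (g.1 k)) +
                               c2 k * complex.Re (cross (S22 q k) (f.2 k) (g.2 k))))
    (\int[lebesgue_measure]_k (c1 k * complex.Im (cross (S11 q k) (f.1 k) (g.1 k)) +
                               c2 k * complex.Im (cross (S22 q k) (f.2 k) (g.2 k)))).
Proof.
rewrite /ipK; congr Complex; apply: eq_Rintegral => k _; rewrite Sform_diag_mul;
  by case: (cross _ _ _) => ? ?; case: (cross _ _ _) => ? ?; rewrite /rC /=; ring.
Qed.

Lemma window_spec s k : 0 <= s ->
  (window s k = 1 /\ `|k| <= s) \/ (window s k = 0 /\ s <= `|k|).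
Proof.
move=> s_ge0; rewrite /window.
have [k_le|k_gt] := lerP k (- s).
  rewrite (le_trans k_le (_ : - s <= s)); last lra.
  by right; rewrite subrr ler_normr; split => //; apply/orP; right; lra.
have [k_le|k_gt'] := lerP k s.
  by left; rewrite subr0 ler_norml; split => //; apply/andP; split; lra.
by right; rewrite subr0 ler_normr; split => //; apply/orP; left; lra.
Qed.

Hypothesis q_gt0 : 0 < q.

Lemma ler_expR_Nmulq x y : (expR (- (x * q)) <= expR (- (y * q))) = (y <= x).
Proof. by rewrite ler_expR lerN2 ler_pM2r. Qed.

Lemma ln_threshold p : 0 < p <= 1 ->
  0 <= - (ln p / q) /\ p = expR (- (- (ln p / q) * q)).
Proof.
move=> /andP[p_gt0 p_le1]; split.
  by rewrite oppr_ge0 mulr_le0_ge0 ?ln_le0 // invr_ge0 ltW.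
by rewrite mulNr opprK divfK ?gt_eqF // lnK ?posrE.
Qed.

Lemma Efam_sym1_unit_step k : unit_step (- (1/2)) (1/2) (Efam_sym1^~ k) (Kstar_sym1 k).
Proof.
have e_gt0 := expR_gt0 (- (`|k| * q)).
split; rewrite /Efam_sym1.
- rewrite ifT; last lra.
  have -> : - (2 * - (1/2)) = 1 :> R by lra.
  by rewrite ln1 mul0r oppr0 /window oppr0 subrr.
- by rewrite lt_gtF // divr_gt0.
move=> t /andP[t_ge t_le]; rewrite /Kstar_sym1.
have [t_lt0|t_ge0] := ltP t 0; last by right; split => //; lra.
have [s_ge0 t_def] := @ln_threshold (- (2 * t)) (ltac:(apply/andP; split; lra)).
set s := - (ln (- (2 * t)) / q) in s_ge0 t_def *.
case: (window_spec k s_ge0) => [[-> k_le]|[-> k_ge]].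
  right; split => //.
  have : expR (- (s * q)) <= expR (- (`|k| * q)) by rewrite ler_expR_Nmulq.
  lra.
left; split => //.
have : expR (- (`|k| * q)) <= expR (- (s * q)) by rewrite ler_expR_Nmulq.
lra.
Qed.

Lemma Efam_sym2_unit_step k : unit_step (- (1/2)) (1/2) (Efam_sym2^~ k) (Kstar_sym2 k).
Proof.
have e_gt0 := expR_gt0 (- (`|k| * q)).
split; rewrite /Efam_sym2.
- by rewrite ifT //; lra.
- rewrite lt_gtF ?ifT ?divr_gt0 //.
  have -> : 2 * (1/2) = 1 :> R by lra.
  by rewrite ln1 mul0r oppr0 /window oppr0 subrr subr0.
move=> t /andP[t_ge t_le]; rewrite /Kstar_sym2.
have [t_lt0|t_ge0] := ltP t 0; first by left; split => //; lra.
have [t_gt0|t_le0] := ltP 0 t; last by left; split => //; lra.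
have [s_ge0 t_def] := @ln_threshold (2 * t) (ltac:(apply/andP; split; lra)).
set s := - (ln (2 * t) / q) in s_ge0 t_def *.
case: (window_spec k s_ge0) => [[-> k_le]|[-> k_ge]].
  left; rewrite subrr; split => //.
  have : expR (- (s * q)) <= expR (- (`|k| * q)) by rewrite ler_expR_Nmulq.
  lra.
right; rewrite subr0; split => //.
have : expR (- (`|k| * q)) <= expR (- (s * q)) by rewrite ler_expR_Nmulq.
lra.
Qed.

Lemma S11_ge0 k : 0 <= S11 q k.
Proof.
rewrite divr_ge0 ?mulr_ge0 // subr_ge0 expR_le1 oppr_le0.
by rewrite mulr_ge0 // ltW.
Qed.

Lemma inK_integrable_diag f : inK q f ->
  integrable (fun k => complex.Re (cross (S11 q k) (f.1 k) (f.1 k))) /\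
  integrable (fun k => complex.Re (cross (S22 q k) (f.2 k) (f.2 k))).
Proof.
case=> mf1 mf2 fin.
have d1_ge0 k := Re_cross_diag_ge0 (f.1 k) (S11_ge0 k).
have d2_ge0 k := Re_cross_diag_ge0 (f.2 k) (S22_ge0 k).
have mRe1 := (measurable_cross measurable_S11 mf1 mf1).1.
have mRe2 := (measurable_cross measurable_S22 mf2 mf2).1.
have W_def k : complex.Re (Sform q f f k) = complex.Re (cross (S11 q k) (f.1 k) (f.1 k)) +
                                          complex.Re (cross (S22 q k) (f.2 k) (f.2 k)).
  exact: Re_addc.
have W_ge0 k : 0 <= complex.Re (Sform q f f k) by rewrite W_def addr_ge0.
have iW : integrable (fun k => complex.Re (Sform q f f k)).
  apply/integrableP; split.
    by apply/measurable_EFinP; rewrite (funext W_def); exact: measurable_funD.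
  by under eq_integral => k _ do rewrite /= ger0_norm //.
by split; apply: integrable_le_norm iW => // k;
  rewrite !ger0_norm // W_def ?lerDl ?lerDr.
Qed.

Lemma inK_integrable_cross f g : inK q f -> inK q g ->
  [/\ integrable (fun k => complex.Re (cross (S11 q k) (f.1 k) (g.1 k))),
  integrable (fun k => complex.Re (cross (S22 q k) (f.2 k) (g.2 k))),
  integrable (fun k => complex.Im (cross (S11 q k) (f.1 k) (g.1 k))) &
  integrable (fun k => complex.Im (cross (S22 q k) (f.2 k) (g.2 k)))].
Proof.
move=> fK gK; have [f1 f2] := inK_integrable_diag fK; have [g1 g2] := inK_integrable_diag gK.
case: fK gK => mf1 mf2 _ [mg1 mg2 _].
have [iRe1 iIm1] := integrable_cross measurable_S11 mf1 mg1 S11_ge0 f1 g1.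
have [iRe2 iIm2] := integrable_cross measurable_S22 mf2 mg2 S22_ge0 f2 g2.
by split.
Qed.

End Crescent.

Theorem theorem3p5 (R : realType) (Rad rad : R) :
  0 < rad -> rad < Rad ->
  forall f g : pfun R,
    inK (qval Rad rad) f -> inK (qval Rad rad) g ->
    is_RS_integral (fun t : R => t)
      (fun t : R => ipK (qval Rad rad) f (Efam (qval Rad rad) t g))
      (- (1 / 2)) (1 / 2)
      (ipK (qval Rad rad) f (Kstar (qval Rad rad) g)).
Proof.
move=> rad_gt0 rad_lt_Rad f g fK gK.
have q_gt0 := qval_gt0 rad_gt0 rad_lt_Rad.
set q := qval Rad rad in fK gK q_gt0 *.
have [iRe1 iRe2 iIm1 iIm2] := inK_integrable_cross q_gt0 fK gK.
under [X in is_RS_integral _ X]eq_fun => t do rewrite Efam_diag ipK_diag_mul.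
rewrite Kstar_diag ipK_diag_mul.
apply: is_RS_integral_Complex; apply: is_RS_integral_diag_mul => //;
  by [ exact: measurable_Kstar_sym1 | exact: measurable_Kstar_sym2
     | exact: measurable_Efam_sym1 | exact: measurable_Efam_sym2
     | exact: Efam_sym1_unit_step q_gt0 | exact: Efam_sym2_unit_step q_gt0 ].
Qed.
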